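(* Let $f=p/q$ be a rational function, $p,q$ of degree $l$, positive on the standard simplex $\Delta$, with $p>0$ on $\Delta$ and $b_\alpha(q,j,\Delta)>0$ for all $|\alpha|=j$, $j\ge l$. Let \[ D_1=\frac{\omega}{\min_{x\in\Delta}f(x)}+1,\qquad D_2=\frac{l(l-1)}{2}\,\frac{\max_{|\alpha|=l}|b_\alpha(p,l,\Delta)|}{\underline p}, \] where $\underline p=\min_\Delta p$. If $k>\max\{D_1,D_2\}$, then $f$ satisfies the global certificate of positivity $\mathrm{Cert}(b(f,k,\Delta))$: $b_\alpha(f,k,\Delta)\ge0$ for all $|\alpha|=k$ and $b_{k\hat e_i}(f,k,\Delta)>0$ for $i=0,\dots,n$.
   Context: $\Delta$ is the standard simplex with barycentric coordinates $\lambda=(1-\sum x_i,x_1,\dots,x_n)$; $B^{(k)}_\alpha=\frac{k!}{\alpha_0!\cdots\alpha_n!}\lambda^\alpha$; $b_\alpha(p,k,\Delta)$ Bernstein coefficients; $b_\alpha(f,k,\Delta)=b_\alpha(p,k,\Delta)/b_\alpha(q,k,\Delta)$; $\hat e_i$ unit vectors of $\mathbb{R}^{n+1}$. $\omega:=\frac{n(n+2)l(l-1)}{24\min_{|\alpha|=l}b_\alpha(q,l,\Delta)}\big(\|\nabla^2p\|_\infty+\zeta\|\nabla^2q\|_\infty\big)$ with $\zeta:=\max\{|\min_{|\alpha|=l}b_\alpha(f,l,\Delta)|,|\max_{|\alpha|=l}b_\alpha(f,l,\Delta)|\}$ and, with convention $\hat e_{-1}:=\hat e_n$, $\|\nabla^2p\|_\infty=\max_{|\gamma|=l-2,0\le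 i<j\le n}|b_{\gamma+\hat e_i+\hat e_{j-1}}+b_{\gamma+\hat e_{i-1}+\hat e_j}-b_{\gamma+\hat e_{i-1}+\hat e_{j-1}}-b_{\gamma+\hat e_i+\hat e_j}|$ for $b=b(p,l,\Delta)$, likewise for $q$. *)

From HB Require Import structures.
From mathcomp Require Import all_boot all_order all_algebra.
Set Implicit Arguments. Unset Strict Implicit. Unset Printing Implicit Defensive.
Import Order.TTheory GRing.Theory Num.Theory.
Local Open Scope ring_scope.

Section Bernstein.
Variables (R : rcfType) (n : nat).

Definition mindex := {ffun 'I_n.+1 -> nat}.
Definition mabs (a : mindex) : nat := (\sum_i a i)%N.
Definition madd (a b : mindex) : mindex := [ffun i => (a i + b i)%N].
Definition mscale (k : nat) (a : mindex) : mindex := [ffun i => (k * a i)%N].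
Definition unitv (i : 'I_n.+1) : mindex := [ffun j => (j == i : nat)].
(* \hat e_(i-1) with the convention \hat e_(-1) = \hat e_n *)
Definition unitv_prev (i : 'I_n.+1) : mindex :=
  if (i : nat) == 0%N then unitv ord_max else unitv (inord i.-1).

(* finite enumeration of the multi-indices with |alpha| = k *)
Definition of_bounded k (a : {ffun 'I_n.+1 -> 'I_k.+1}) : mindex :=
  [ffun i => (a i : nat)].

(* barycentric coordinates lambda(x) = (1 - sum x_i, x_1, ..., x_n) *)
Definition bary (x : 'rV[R]_n) (i : 'I_n.+1) : R :=
  match split (i : 'I_(1 + n)) with
  | inl _ => 1 - \sum_j x 0 j
  | inr j => x 0 j
  end.

Definition in_simplex (x : 'rV[R]_n) : Prop := forall i, 0 <= bary x i.

Definition bern (k : nat) (a : mindex) (x : 'rV[R]_n) : R :=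
  (k`!)%:R / (\prod_i (a i)`!)%:R * \prod_i bary x i ^+ a i.

Definition bern_sum (k : nat) (b : mindex -> R) (x : 'rV[R]_n) : R :=
  \sum_(a : {ffun 'I_n.+1 -> 'I_k.+1} | mabs (of_bounded a) == k)
     b (of_bounded a) * bern k (of_bounded a) x.

Definition bern_coefs (p : 'rV[R]_n -> R) (k : nat) (b : mindex -> R) : Prop :=
  forall x, p x = bern_sum k b x.

(* min / max of b_alpha over |alpha| = k (the set contains k \hat e_0) *)
Definition bmin (k : nat) (b : mindex -> R) : R :=
  \big[Num.min/b (mscale k (unitv ord0))]_(a : {ffun 'I_n.+1 -> 'I_k.+1} |
       mabs (of_bounded a) == k) b (of_bounded a).
Definition bmax (k : nat) (b : mindex -> R) : R :=
  \big[Num.max/b (mscale k (unitv ord0))]_(a : {ffun 'I_n.+1 -> 'I_k.+1} |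
       mabs (of_bounded a) == k) b (of_bounded a).

(* ||nabla^2 p||_infty computed from b = b(p,l,Delta) *)
Definition hess_norm (l : nat) (b : mindex -> R) : R :=
  \big[Num.max/0]_(g : {ffun 'I_n.+1 -> 'I_(l - 2).+1} |
                     mabs (of_bounded g) == (l - 2)%N)
   \big[Num.max/0]_(i : 'I_n.+1)
    \big[Num.max/0]_(j : 'I_n.+1 | (i < j)%N)
     let gm := of_bounded g in
     `| b (madd gm (madd (unitv i) (unitv_prev j)))
        + b (madd gm (madd (unitv_prev i) (unitv j)))
        - b (madd gm (madd (unitv_prev i) (unitv_prev j)))
        - b (madd gm (madd (unitv i) (unitv j))) |.

Definition omega (l : nat) (bp bq : mindex -> R) : R :=
  let bf := fun a => bp a / bq a in
  let zeta := Num.max `|bmin l bf| `|bmax l bf| in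
  (n * (n + 2) * l * (l - 1))%:R / (24%:R * bmin l bq)
    * (hess_norm l bp + zeta * hess_norm l bq).

Definition is_min_on_simplex (g : 'rV[R]_n -> R) (m : R) : Prop :=
  (exists2 x, in_simplex x & g x = m) /\ (forall x, in_simplex x -> m <= g x).

End Bernstein.

From HB Require Import structures.
From mathcomp Require Import all_boot all_order all_algebra.
From mathcomp Require Import zify ring lra.
Import Order.TTheory GRing.Theory Num.Theory.
Local Open Scope ring_scope.
Set Implicit Arguments. Unset Strict Implicit. Unset Printing Implicit Defensive.

(* Since b_a(q,k) > 0 by hypothesis, the certificate reduces to the positivity of
   every Bernstein coefficient b_a(p,k), |a| = k, and this already follows from
   k > D2.  The proof is the classical
   degree-elevation estimate:
   - multi-index sums [msum] and the multinomial theorem [multinomial];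
   - the homogeneous form [hform] of a family of coefficients, degree elevation
     [hform_elev], and uniqueness of coefficients by Kronecker substitution
     [hform_eq0_coef], whence b(p,k) = elev k l b(p,l) [bern_coefs_elev];
   - at the grid point a/k of the simplex, rho * b_a(p,k) (rho = k^_l / k^l) is a
     sub-weighted version of p(a/k) = sum_b b_b(p,l) B_b(a/k) with missing mass
     1 - rho <= C(l,2)/k, so rho * b_a(p,k) >= min p - C(l,2)/k max |b(p,l)|
     [elev_gt0];
   - k > D2 says exactly C(l,2) max |b(p,l)| < k min p, which concludes. *)

Section MultiIndexSums.
Variables (R : numFieldType) (n : nat).
Local Notation mi := (mindex n).

Definition msum (k : nat) (F : mi -> R) : R :=
  \sum_(a : {ffun 'I_n.+1 -> 'I_k.+1} | mabs (of_bounded a) == k) F (of_bounded a).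

Definition mfact (a : mi) : nat := (\prod_i (a i)`!)%N.
Definition mpow (lam : 'I_n.+1 -> R) (a : mi) : R := \prod_i lam i ^+ a i.
Definition mle (b a : mi) : bool := [forall i, (b i <= a i)%N].
Definition msub (a b : mi) : mi := [ffun i => (a i - b i)%N].

Lemma mleP (b a : mi) : reflect (forall i, (b i <= a i)%N) (mle b a).
Proof. exact: forallP. Qed.

Lemma mabs_le (a : mi) i : (a i <= mabs a)%N.
Proof. by rewrite /mabs (bigD1 i) //= leq_addr. Qed.

Lemma mabs_madd (a b : mi) : mabs (madd a b) = (mabs a + mabs b)%N.
Proof. by rewrite /mabs -big_split; apply: eq_bigr => i _; rewrite ffunE. Qed.

Lemma mabs_msub (a b : mi) : mle b a -> mabs (msub a b) = (mabs a - mabs b)%N.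
Proof.
move/mleP=> le_ba; have -> : mabs a = (mabs (msub a b) + mabs b)%N.
  by rewrite /mabs -big_split; apply: eq_bigr => i _; rewrite ffunE /= subnK.
by rewrite addnK.
Qed.

Lemma msub_madd (a b : mi) : msub (madd b a) b = a.
Proof. by apply/ffunP => i; rewrite !ffunE addKn. Qed.

Lemma madd_msub (a b : mi) : mle b a -> madd b (msub a b) = a.
Proof. by move/mleP=> le_ba; apply/ffunP => i; rewrite !ffunE subnKC. Qed.

Lemma mle_madd (a b : mi) : mle b (madd b a).
Proof. by apply/mleP => i; rewrite ffunE leq_addr. Qed.

Lemma mabs_unitv i : mabs (unitv i : mi) = 1%N.
Proof.
rewrite /mabs (bigD1 i) //= ffunE eqxx big1 // => j /negPf ji.
by rewrite ffunE ji.
Qed.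

Lemma mabs_mscale k i : mabs (mscale k (unitv i) : mi) = k.
Proof.
rewrite /mabs (bigD1 i) //= !ffunE eqxx muln1 big1 ?addn0 // => j /negPf ji.
by rewrite !ffunE ji muln0.
Qed.

Lemma mle_unitv i (a : mi) : mle (unitv i) a = (0 < a i)%N.
Proof.
apply/mleP/idP => [/(_ i)|a_pos j]; first by rewrite ffunE eqxx.
by rewrite ffunE; case: eqP => [->|].
Qed.

Lemma mfact_gt0 (a : mi) : (0 < mfact a)%N.
Proof. by rewrite /mfact prodn_gt0 // => i; rewrite fact_gt0. Qed.

Lemma natr_mfact_neq0 (a : mi) : (mfact a)%:R != 0 :> R.
Proof. by rewrite pnatr_eq0 -lt0n mfact_gt0. Qed.

Lemma natr_fact_neq0 m : (m`!)%:R != 0 :> R.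
Proof. by rewrite pnatr_eq0 -lt0n fact_gt0. Qed.

Lemma mfact_sub_unit (a : mi) i : (0 < a i)%N ->
  mfact a = (a i * mfact (msub a (unitv i)))%N.
Proof.
move=> a_pos; rewrite /mfact (bigD1 i) // [in RHS](bigD1 i) //= !ffunE eqxx.
rewrite mulnA subn1 -{1}(prednK a_pos) factS prednK //; congr (_ * _)%N.
by apply: eq_bigr => j /negPf ji; rewrite !ffunE ji subn0.
Qed.

Lemma mfact_ffact (a b : mi) : mle b a ->
  mfact a = ((\prod_i (a i ^_ b i)) * mfact (msub a b))%N.
Proof.
move/mleP=> le_ba; rewrite /mfact -big_split /=; apply: eq_bigr => i _.
by rewrite ffunE ffact_fact.
Qed.

Lemma mpow_madd lam (a b : mi) : mpow lam (madd a b) = mpow lam a * mpow lam b.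
Proof. by rewrite /mpow -big_split; apply: eq_bigr => i _; rewrite ffunE exprD. Qed.

Lemma mpow_unitv lam i : mpow lam (unitv i) = lam i.
Proof.
rewrite /mpow (bigD1 i) //= ffunE eqxx expr1 big1 ?mulr1 // => j /negPf ji.
by rewrite ffunE ji expr0.
Qed.

Lemma mpow_scale lam (S : R) (a : mi) :
  mpow (fun i => lam i / S) a = mpow lam a / S ^+ mabs a.
Proof.
rewrite /mpow (eq_bigr (fun i => lam i ^+ a i * S^-1 ^+ a i)) => [|i _]; last first.
  by rewrite exprMn.
by rewrite big_split /= prodrXr -/(mabs a) exprVn.
Qed.

Lemma eq_msum k F G : (forall a, mabs a = k -> F a = G a) -> msum k F = msum k G.
Proof. by move=> eqFG; apply: eq_bigr => a /eqP /eqFG. Qed.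

Lemma ler_msum k (F G : mi -> R) :
  (forall a, mabs a = k -> F a <= G a) -> msum k F <= msum k G.
Proof. by move=> leFG; apply: ler_sum => a /eqP /leFG. Qed.

Lemma msumB k F G : msum k (fun a => F a - G a) = msum k F - msum k G.
Proof. by rewrite /msum sumrB. Qed.

Lemma msumMl k F c : msum k (fun a => c * F a) = c * msum k F.
Proof. by rewrite /msum mulr_sumr. Qed.

Lemma msumMr k F c : msum k (fun a => F a * c) = msum k F * c.
Proof. by rewrite /msum mulr_suml. Qed.

Lemma msum_exchange k l (T : mi -> mi -> R) :
  msum k (fun a => msum l (T a)) = msum l (fun b => msum k (T^~ b)).
Proof. by rewrite /msum exchange_big. Qed.

Definition to_bounded k (a : mi) : {ffun 'I_n.+1 -> 'I_k.+1} :=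
  [ffun i => inord (a i)].

Lemma to_boundedK k (a : mi) : mabs a = k -> of_bounded (to_bounded k a) = a.
Proof.
by move=> abs_a; apply/ffunP => i; rewrite !ffunE inordK // ltnS -abs_a mabs_le.
Qed.

Lemma of_bounded_inj k : injective (@of_bounded n k).
Proof.
move=> a a' eq_aa'; apply/ffunP => i; apply/val_inj.
by have := congr1 (fun f : mi => f i) eq_aa'; rewrite !ffunE.
Qed.

Lemma msum_reindex k k' (P : pred mi) (f g : mi -> mi) (F : mi -> R) :
  (forall a', mabs a' = k' -> [/\ mabs (f a') = k, P (f a') & g (f a') = a']) ->
  (forall a, mabs a = k -> P a -> mabs (g a) = k' /\ f (g a) = a) ->
  msum k (fun a => if P a then F a else 0) = msum k' (F \o f).
Proof.
move=> f_into g_into; rewrite /msum -big_mkcondr /=.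
pose h (a' : {ffun 'I_n.+1 -> 'I_k'.+1}) := to_bounded k (f (of_bounded a')).
pose h' (a : {ffun 'I_n.+1 -> 'I_k.+1}) := to_bounded k' (g (of_bounded a)).
have hK a : mabs (of_bounded a) == k -> P (of_bounded a) -> h (h' a) = a.
  move=> /eqP abs_a Pa; have [abs_g fg] := g_into _ abs_a Pa.
  by apply: of_bounded_inj; rewrite /h /h' !to_boundedK // ?fg // (f_into _ abs_g).1.
rewrite (reindex_onto h h') => [|a /andP[]]; last exact: hK.
apply: eq_big => a'; last first.
  move=> /andP[/andP[/eqP abs_h Ph] /eqP h'h].
  have abs_a' : mabs (of_bounded a') = k'.
    by have [abs_g _] := g_into _ abs_h Ph; rewrite -h'h /h' to_boundedK.
  by have [abs_f _ _] := f_into _ abs_a'; rewrite /h to_boundedK.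
apply/idP/idP => [/andP[/andP[/eqP abs_h Ph] /eqP h'h]|/eqP abs_a'].
  have [abs_g _] := g_into _ abs_h Ph.
  by rewrite -h'h /h' to_boundedK ?abs_g.
have [abs_f Pf gf] := f_into _ abs_a'.
rewrite /h to_boundedK // abs_f eqxx Pf /=; apply/eqP/of_bounded_inj.
by rewrite /h' (to_boundedK abs_f) gf to_boundedK.
Qed.

Lemma msum_shift k (b : mi) (F : mi -> R) : (mabs b <= k)%N ->
  msum k (fun a => if mle b a then F a else 0) =
  msum (k - mabs b) (fun g => F (madd b g)).
Proof.
move=> le_bk; apply: (msum_reindex (g := fun a => msub a b)) => [g abs_g|a abs_a le_ba].
  by rewrite mabs_madd abs_g subnKC // mle_madd msub_madd.
by rewrite mabs_msub // abs_a madd_msub.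
Qed.

Lemma msum0 F : msum 0 F = F [ffun _ => 0%N].
Proof.
have zero (a : {ffun 'I_n.+1 -> 'I_1}) : of_bounded a = [ffun _ => 0%N] :> mi.
  by apply/ffunP => i; rewrite !ffunE; case: (a i) => -[].
rewrite /msum (eq_bigl xpredT) => [|a]; last first.
  by rewrite zero /mabs big1 // => i _; rewrite ffunE.
rewrite (eq_bigr (fun _ => F [ffun _ => 0%N])) => [|a _]; last by rewrite zero.
by rewrite sumr_const card_ffun card_ord exp1n.
Qed.

Lemma multinomial m lam :
  msum m (fun a => (m`!)%:R / (mfact a)%:R * mpow lam a) = (\sum_i lam i) ^+ m.
Proof.
elim: m => [|m IH].
  rewrite msum0 /mfact /mpow expr0 !big1 ?divr1 ?mulr1 // => i _; by rewrite ffunE.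
pose T a i := (m`!)%:R / (mfact (msub a (unitv i)))%:R * mpow lam a.
(* multiplying by lam_i shifts the multi-index by e_i *)
have shift_unit i : lam i * msum m (fun a => (m`!)%:R / (mfact a)%:R * mpow lam a)
    = msum m.+1 (fun a => if mle (unitv i) a then T a i else 0).
  rewrite msum_shift ?mabs_unitv // subn1 -msumMl; apply: eq_msum => a _.
  by rewrite /T msub_madd mpow_madd mpow_unitv mulrCA.
(* and the m + 1 shifted factorials recombine into (m+1)!/a! *)
have recombine a : mabs a = m.+1 ->
    \sum_i (if mle (unitv i) a then T a i else 0) = (m.+1`!)%:R / (mfact a)%:R * mpow lam a.
  move=> abs_a; rewrite (eq_bigr (fun i => (a i)%:R * ((m`!)%:R / (mfact a)%:R * mpow lam a)));
    last first.
    move=> i _; rewrite mle_unitv /T; case: (posnP (a i)) => [->|a_pos]; first by rewrite !mul0r.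
    rewrite (mfact_sub_unit a_pos) natrM.
    have fact_neq0 := natr_mfact_neq0 (msub a (unitv i)).
    have ai_neq0 : (a i)%:R != 0 :> R by rewrite pnatr_eq0 -lt0n.
    by field; rewrite fact_neq0 ai_neq0.
  by rewrite -mulr_suml -natr_sum -/(mabs a) abs_a factS natrM !mulrA.
rewrite exprS -IH mulr_suml (eq_bigr _ (fun i _ => shift_unit i)) /msum exchange_big /=.
by apply: eq_bigr => a /eqP /recombine.
Qed.

End MultiIndexSums.

Lemma digits_inj B m (f g : nat -> nat) : (forall i, f i < B)%N -> (forall i, g i < B)%N ->
  (\sum_(i < m) f i * B ^ i = \sum_(i < m) g i * B ^ i)%N ->
  forall i, (i < m)%N -> f i = g i.
Proof.
elim: m f g => [//|m IH] f g f_lt g_lt.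
have B_gt0 : (0 < B)%N := leq_ltn_trans (leq0n _) (f_lt 0%N).
have tail (h : nat -> nat) : (\sum_(i < m) h (bump 0 i) * B ^ bump 0 i =
    (\sum_(i < m) h i.+1 * B ^ i) * B)%N.
  by rewrite big_distrl /=; apply: eq_bigr => i _; rewrite /bump /= expnSr mulnA.
rewrite !big_ord_recl /= !expn0 !muln1 !tail => eq_sums.
have eq0 : f 0%N = g 0%N.
  have := congr1 (modn^~ B) eq_sums; rewrite /= ![(_ 0%N + _)%N]addnC.
  by rewrite !modnMDl !modn_small.
move: eq_sums; rewrite eq0 => /eqP; rewrite eqn_add2l eqn_mul2r (gtn_eqF B_gt0) /=.
move=> /eqP eq_tail [//|i lt_im].
exact: (IH (fun j => f j.+1) (fun j => g j.+1)).
Qed.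

Section HomogeneousForm.
Variables (R : numFieldType) (n : nat).
Local Notation mi := (mindex n).

(* The homogeneous form of degree k with Bernstein coefficients c:
   sum_{|a| = k} c_a k!/a! lam^a.  On the simplex, lam = lambda(x). *)
Definition hform (k : nat) (c : mi -> R) (lam : 'I_n.+1 -> R) : R :=
  msum k (fun a => c a * ((k`!)%:R / (mfact a)%:R) * mpow lam a).

(* Degree elevation from l to k:
   b^(k)_a = sum_{b <= a, |b| = l} b_b C(a, b) / C(k, l), written with factorials. *)
Definition elev (k l : nat) (b : mi -> R) (a : mi) : R :=
  (mfact a)%:R / (k`!)%:R * msum l (fun be => if mle be a then
     b be * (l`!)%:R / (mfact be)%:R * ((k - l)`!)%:R / (mfact (msub a be))%:R
     else 0).

Lemma hformB k (c d : mi -> R) lam :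
  hform k (fun a => c a - d a) lam = hform k c lam - hform k d lam.
Proof. by rewrite /hform -msumB; apply: eq_msum => a _; rewrite !mulrBl. Qed.

Lemma hform1 k lam : hform k (fun _ => 1) lam = (\sum_i lam i) ^+ k.
Proof. by rewrite -multinomial /hform; apply: eq_msum => a _; rewrite mul1r. Qed.

Lemma eq_hform k c (lam mu : 'I_n.+1 -> R) : lam =1 mu -> hform k c lam = hform k c mu.
Proof.
move=> eq_lm; apply: eq_msum => a _; congr (_ * _).
by apply: eq_bigr => i _; rewrite eq_lm.
Qed.

Lemma hform_scale k c lam (S : R) :
  hform k c (fun i => lam i / S) = hform k c lam / S ^+ k.
Proof.
by rewrite /hform -msumMr; apply: eq_msum => a abs_a; rewrite mpow_scale abs_a mulrA.
Qed.

Lemma hform_elev k l b lam : (l <= k)%N ->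
  hform k (elev k l b) lam = hform l b lam * (\sum_i lam i) ^+ (k - l).
Proof.
move=> le_lk; rewrite /hform.
pose G a be := if mle be a then
  b be * (l`!)%:R / (mfact be)%:R * ((k - l)`!)%:R / (mfact (msub a be))%:R else 0.
transitivity (msum k (fun a => msum l (fun be => G a be * mpow lam a))).
  apply: eq_msum => a _; rewrite msumMr /elev -/(G a).
  have k_neq0 := natr_fact_neq0 R k; have a_neq0 := natr_mfact_neq0 R a.
  by field; rewrite k_neq0 a_neq0.
rewrite msum_exchange -msumMr; apply: eq_msum => be abs_be.
rewrite (eq_msum (G := fun a => if mle be a then G a be * mpow lam a else 0));
  last by move=> a _; rewrite /G; case: ifP; rewrite ?mul0r.
rewrite msum_shift abs_be // -(multinomial (k - l) lam) -msumMl.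
by apply: eq_msum => g _; rewrite /G mle_madd msub_madd mpow_madd; ring.
Qed.

(* Kronecker substitution: the exponent of t in prod_i (t^((k+1)^i))^(a_i),
   i.e. the base-(k+1) number with digits a_i; it determines a. *)
Definition kron_code k (a : {ffun 'I_n.+1 -> 'I_k.+1}) : nat :=
  (\sum_i a i * k.+1 ^ i)%N.

Lemma kron_code_inj k : injective (@kron_code k).
Proof.
move=> a a' eq_code; apply/ffunP => i; apply/val_inj.
have digit (f : {ffun 'I_n.+1 -> 'I_k.+1}) j : (f (inord j) < k.+1)%N by [].
have := digits_inj (digit a) (digit a') _ (ltn_ord i); rewrite inord_val; apply.
under eq_bigr do rewrite inord_val.
by under [RHS]eq_bigr do rewrite inord_val.
Qed.

(* A form vanishing at all positive points has zero coefficients: under the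
   Kronecker substitution it becomes a univariate polynomial with infinitely many
   roots, whose coefficients are the c_a up to nonzero factors. *)
Lemma hform_eq0_coef k c : (forall lam, (forall i, 0 < lam i) -> hform k c lam = 0) ->
  forall a, mabs a = k -> c a = 0.
Proof.
move=> vanish a abs_a.
pose cf (a : {ffun 'I_n.+1 -> 'I_k.+1}) :=
  c (of_bounded a) * ((k`!)%:R / (mfact (of_bounded a))%:R).
pose P : {poly R} := \sum_(a | mabs (of_bounded a) == k) cf a *: 'X^(kron_code a).
have P_roots t : 0 < t -> P.[t] = 0.
  move=> t_gt0; rewrite -(vanish (fun i => t ^+ (k.+1 ^ i))) => [|i]; last exact: exprn_gt0.
  rewrite /P horner_sum; apply: eq_bigr => b _.
  rewrite hornerZ hornerXn /mpow -prodrXr; congr (_ * _).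
  by apply: eq_bigr => i _; rewrite ffunE -exprM mulnC.
have P_eq0 : P = 0.
  apply: (@roots_geq_poly_eq0 _ _ [seq (i.+1)%:R | i <- iota 0 (size P)]).
  - by apply/allP => _ /mapP[i _ ->]; rewrite /root P_roots.
  - by rewrite map_inj_uniq ?iota_uniq // => i j /eqP; rewrite eqr_nat => /eqP[].
  - by rewrite size_map size_iota.
have := congr1 (fun p : {poly R} => p`_(kron_code (to_bounded k a))) P_eq0.
rewrite /P coef_sumMXn coef0 (bigD1 (to_bounded k a)) /=; last first.
  by rewrite to_boundedK // abs_a !eqxx.
rewrite big1 ?addr0; last first.
  by move=> b /andP[/andP[_ /eqP /kron_code_inj ->]]; rewrite eqxx.
rewrite /cf to_boundedK // => /eqP; rewrite !mulf_eq0 invr_eq0.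
by rewrite (negPf (natr_fact_neq0 _ _)) (negPf (natr_mfact_neq0 _ _)) !orbF => /eqP.
Qed.

(* Multivariate Vandermonde identity: elevating the constant 1 gives 1,
   i.e. sum_{b <= a, |b| = l} C(a, b) = C(k, l) for |a| = k. *)
Lemma elev1 k l a : (l <= k)%N -> mabs a = k -> elev k l (fun _ => 1) a = 1.
Proof.
move=> le_lk abs_a; apply/eqP; rewrite -subr_eq0; apply/eqP; move: a abs_a.
apply: hform_eq0_coef => lam _.
by rewrite hformB hform_elev // !hform1 -exprD subnKC // subrr.
Qed.

End HomogeneousForm.

Section BernsteinOnSimplex.
Variables (R : rcfType) (n : nat).
Local Notation mi := (mindex n).

Lemma bary0 (x : 'rV[R]_n) : bary x ord0 = 1 - \sum_j x 0 j.
Proof. by rewrite /bary; case: splitP => //= j /eqP; rewrite eq_sym. Qed.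

Lemma bary_lift (x : 'rV[R]_n) j : bary x (lift ord0 j) = x 0 j.
Proof.
rewrite /bary; case: splitP => /= [[[]]//|j'].
by rewrite /bump /= add1n => -[] /val_inj ->.
Qed.

Lemma sum_bary (x : 'rV[R]_n) : \sum_i bary x i = 1.
Proof.
rewrite big_ord_recl bary0.
by under [X in _ + X = _]eq_bigr do rewrite bary_lift; rewrite subrK.
Qed.

Lemma bary_row (lam : 'I_n.+1 -> R) : \sum_i lam i = 1 ->
  bary (\row_j lam (lift ord0 j)) =1 lam.
Proof.
move=> sum_lam i; case: (unliftP ord0 i) => [j ->|->]; first by rewrite bary_lift mxE.
rewrite bary0 (eq_bigr (fun j => lam (lift ord0 j))) => [|j _]; last by rewrite mxE.
by rewrite -sum_lam big_ord_recl addrK.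
Qed.

Lemma bern_sumE k (b : mi -> R) x : bern_sum k b x = hform k b (bary x).
Proof. by apply: eq_bigr => a _; rewrite /bern mulrA. Qed.

(* Bernstein coefficients are unique: a Bernstein sum vanishing on the simplex
   has zero coefficients (by homogeneity it vanishes at every positive point). *)
Lemma bern_coef_unique k (c : mi -> R) : (forall x, in_simplex x -> bern_sum k c x = 0) ->
  forall a, mabs a = k -> c a = 0.
Proof.
move=> vanish; apply: hform_eq0_coef => lam lam_gt0.
pose S := \sum_i lam i.
have S_gt0 : 0 < S by rewrite /S big_ord_recl ltr_pwDl // sumr_ge0 // => i _; exact: ltW.
pose x : 'rV[R]_n := \row_j (lam (lift ord0 j) / S).
have bary_x : bary x =1 (fun i => lam i / S).
  by apply: bary_row; rewrite -mulr_suml divff ?gt_eqF.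
have x_in : in_simplex x by move=> i; rewrite bary_x divr_ge0 // ltW.
have := vanish x x_in; rewrite bern_sumE (eq_hform _ _ bary_x) hform_scale.
by move/eqP; rewrite mulf_eq0 invr_eq0 expf_eq0 (gt_eqF S_gt0) andbF orbF => /eqP.
Qed.

Lemma bern_coefs_elev (p : 'rV[R]_n -> R) k l bl bk : (l <= k)%N ->
  bern_coefs p l bl -> bern_coefs p k bk ->
  forall a, mabs a = k -> bk a = elev k l bl a.
Proof.
move=> le_lk p_l p_k a abs_a; apply/eqP; rewrite -subr_eq0; apply/eqP; move: a abs_a.
apply: bern_coef_unique => x _.
by rewrite bern_sumE hformB hform_elev // sum_bary expr1n mulr1 -!bern_sumE -p_l -p_k subrr.
Qed.

End BernsteinOnSimplex.

Lemma ffact_le_exp m e : (m ^_ e <= m ^ e)%N.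
Proof.
elim: e m => [//|e IH] m; rewrite ffactnS expnS leq_mul //.
apply: leq_trans (IH _) _; case: e {IH} => [|e]; first by rewrite !expn0.
by rewrite leq_exp2r // leq_pred.
Qed.

(* k^l - k^_l <= C(l, 2) k^(l-1), i.e. 1 - k^_l / k^l <= C(l, 2) / k. *)
Lemma ffact_defect k l : (k * k ^ l <= k * k ^_ l + 'C(l, 2) * k ^ l)%N.
Proof.
elim: l => [|l IH]; first by rewrite bin_small // addn0.
have := ffact_le_exp k l; rewrite ffactnSr binS bin1 expnS.
nia.
Qed.

Section WeightedSums.
Variables (R : realFieldType) (n : nat).
Local Notation mi := (mindex n).

Lemma msum_weights_lower l (b u v : mi -> R) (M : R) :
  (forall be, mabs be = l -> `|b be| <= M /\ 0 <= u be <= v be) ->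
  msum l (fun be => b be * v be) - M * (msum l v - msum l u)
  <= msum l (fun be => b be * u be).
Proof.
move=> bounds; rewrite lerBlDr -lerBlDl -!msumB -msumMl.
apply: ler_msum => be /bounds[b_le /andP[u_ge0 u_le_v]].
rewrite -mulrBr ler_wpM2r ?subr_ge0 //.
exact: le_trans (ler_norm _) b_le.
Qed.

End WeightedSums.

Section ElevationEstimate.
Variables (R : rcfType) (n k l : nat) (al : mindex n).
Hypotheses (k_gt0 : (0 < k)%N) (le_lk : (l <= k)%N) (abs_al : mabs al = k).
Local Notation mi := (mindex n).

Definition grid (i : 'I_n.+1) : R := (al i)%:R / k%:R.
Definition vweight (be : mi) : R := (l`!)%:R / (mfact be)%:R * mpow grid be.
Definition uweight (be : mi) : R :=
  if mle be al then
    (l`!)%:R / (mfact be)%:R * (\prod_i (al i ^_ be i))%N%:R / ((k ^ l)%N)%:R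
  else 0.
Definition rho : R := ((k ^_ l)%N)%:R / ((k ^ l)%N)%:R.

Let kR_gt0 : 0 < k%:R :> R. Proof. by rewrite ltr0n. Qed.
Let kl_gt0 : 0 < ((k ^ l)%N)%:R :> R. Proof. by rewrite ltr0n expn_gt0 k_gt0. Qed.

Lemma sum_grid : \sum_i grid i = 1.
Proof. by rewrite -mulr_suml -natr_sum -/(mabs al) abs_al divff ?gt_eqF. Qed.

Lemma grid_ge0 i : 0 <= grid i.
Proof. by rewrite divr_ge0 // ltW. Qed.

Lemma sum_vweight : msum l vweight = 1.
Proof. by rewrite /vweight multinomial sum_grid expr1n. Qed.

Lemma rho_elev (b : mi -> R) : rho * elev k l b al = msum l (fun be => b be * uweight be).
Proof.
rewrite /elev mulrA -msumMl; apply: eq_msum => be abs_be; rewrite /uweight.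
case: ifP => le_be; last by rewrite !mulr0.
rewrite /rho -(ffact_fact le_lk) (mfact_ffact le_be) !natrM.
have kl_neq0 : ((k ^_ l)%N)%:R != 0 :> R by rewrite pnatr_eq0 -lt0n ffact_gt0.
have kl'_neq0 := lt0r_neq0 kl_gt0; have be_neq0 := natr_mfact_neq0 R be.
have diff_neq0 := natr_mfact_neq0 R (msub al be).
have fact_neq0 := natr_fact_neq0 R (k - l).
by field; rewrite kl_neq0 kl'_neq0 be_neq0 diff_neq0 fact_neq0.
Qed.

Lemma sum_uweight : msum l uweight = rho.
Proof.
by rewrite -[RHS]mulr1 -(elev1 R le_lk abs_al) rho_elev; apply: eq_msum => be _; rewrite mul1r.
Qed.

Lemma uweight_bounds be : mabs be = l -> 0 <= uweight be <= vweight be.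
Proof.
move=> abs_be; have fact_ge0 : 0 <= (l`!)%:R / (mfact be)%:R :> R by rewrite divr_ge0.
have -> : vweight be =
    (l`!)%:R / (mfact be)%:R * (\prod_i (al i ^ be i))%N%:R / ((k ^ l)%N)%:R.
  rewrite /vweight /grid mpow_scale abs_be natrX natr_prod mulrA.
  by congr (_ * _ / _); apply: eq_bigr => i _; rewrite natrX.
rewrite /uweight; case: ifP => le_be; last by rewrite lexx /= !mulr_ge0 ?invr_ge0.
rewrite !mulr_ge0 ?invr_ge0 //= ler_pM2r ?invr_gt0 // ler_wpM2l // ler_nat.
by apply: leq_prod => i _; apply: ffact_le_exp.
Qed.

Lemma one_sub_rho : 1 - rho <= ('C(l, 2))%:R / k%:R.
Proof.
have := ffact_defect k l; rewrite -(ler_nat R) !natrD !natrM => defect.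
rewrite -subr_ge0.
have -> : 'C(l, 2)%:R / k%:R - (1 - rho) =
    ('C(l, 2)%:R * ((k ^ l)%N)%:R + k%:R * ((k ^_ l)%N)%:R - k%:R * ((k ^ l)%N)%:R)
    / (k%:R * ((k ^ l)%N)%:R).
  by rewrite /rho; field; rewrite !gt_eqF.
by apply: divr_ge0; rewrite ?subr_ge0 1?addrC // mulr_ge0 // ltW.
Qed.

(* Indeed
   rho * elev = sum b u >= sum b v - M (1 - rho) >= pm - M C(l, 2) / k > 0. *)
Lemma elev_gt0 (b : mi -> R) (M pm : R) : 0 <= M ->
  (forall be, mabs be = l -> `|b be| <= M) ->
  (forall x, in_simplex x -> pm <= hform l b (bary x)) ->
  ('C(l, 2))%:R * M < k%:R * pm -> 0 < elev k l b al.
Proof.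
move=> M_ge0 b_le pm_le CM_lt.
have rho_gt0 : 0 < rho by rewrite divr_gt0 // ltr0n ffact_gt0.
have value_ge : pm <= msum l (fun be => b be * vweight be).
  have bary_grid := bary_row sum_grid.
  have grid_in : in_simplex (\row_j grid (lift ord0 j)).
    by move=> i; rewrite bary_grid grid_ge0.
  apply: le_trans (pm_le _ grid_in) _; rewrite (eq_hform _ _ bary_grid).
  suff -> : hform l b grid = msum l (fun be => b be * vweight be) by [].
  by rewrite /hform; apply: eq_msum => be _; rewrite /vweight !mulrA.
have lower := msum_weights_lower (fun be abs_be =>
  conj (b_le be abs_be) (uweight_bounds abs_be)).
rewrite sum_vweight sum_uweight -rho_elev in lower.
have loss : M * (1 - rho) <= M * ('C(l, 2)%:R / k%:R) := ler_wpM2l M_ge0 one_sub_rho.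
have gain : M * ('C(l, 2)%:R / k%:R) < pm.
  by rewrite mulrA ltr_pdivrMr // mulrC [pm * _]mulrC.
rewrite -(pmulr_rgt0 _ rho_gt0); lra.
Qed.

End ElevationEstimate.

Lemma bin2_lt_leq l k : ('C(l, 2) < k)%N -> (l <= k)%N.
Proof.
have e : ('C(l, 2) * 2 = l * l.-1)%N.
  by rewrite -[X in ('C(l, 2) * X)%N]/(2`!) bin_ffact ffactnS ffactn1.
nia.
Qed.

Lemma natr_bin2 (R : numFieldType) l : ('C(l, 2))%:R = (l * (l - 1))%:R / 2%:R :> R.
Proof.
have e : (l * (l - 1) = 'C(l, 2) * 2)%N.
  by rewrite -[X in ('C(l, 2) * X)%N]/(2`!) bin_ffact ffactnS ffactn1 subn1.
by rewrite e natrM mulfK // pnatr_eq0.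
Qed.

Section CoefficientBounds.
Variables (R : rcfType) (n : nat).
Local Notation mi := (mindex n).

Lemma bmax_ge l (b : mi -> R) a : mabs a = l -> b a <= bmax l b.
Proof.
move=> abs_a; rewrite /bmax (bigD1 (to_bounded l a)) /=; last by rewrite to_boundedK ?abs_a.
by rewrite to_boundedK // le_max lexx.
Qed.

(* On the simplex a Bernstein sum is a convex combination of its coefficients,
   hence bounded by any bound on them. *)
Lemma bern_sum_le l (b : mi -> R) (M : R) x : in_simplex x ->
  (forall a, mabs a = l -> b a <= M) -> bern_sum l b x <= M.
Proof.
move=> x_in b_le; rewrite bern_sumE -[M]mulr1 -(expr1n _ l) -(sum_bary x) -hform1.
rewrite /hform -msumMl; apply: ler_msum => a abs_a; rewrite mul1r -!mulrA.
rewrite ler_wpM2r ?b_le // !mulr_ge0 ?invr_ge0 //.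
by rewrite prodr_ge0 // => i _; rewrite exprn_ge0.
Qed.

End CoefficientBounds.

Unset Implicit Arguments.
Set Strict Implicit.

Theorem corollary5p15 (R : rcfType) (n l : nat)
    (p q : 'rV[R]_n -> R)
    (bp bq : nat -> mindex n -> R)
    (Hbp : forall j, (l <= j)%N -> bern_coefs p j (bp j))
    (Hbq : forall j, (l <= j)%N -> bern_coefs q j (bq j))
    (Hf_pos : forall x, in_simplex x -> 0 < p x / q x)
    (Hp_pos : forall x, in_simplex x -> 0 < p x)
    (Hbq_pos : forall j (a : mindex n), (l <= j)%N -> mabs a = j -> 0 < bq j a)
    (fmin pmin : R)
    (Hfmin : is_min_on_simplex (fun x => p x / q x) fmin)
    (Hpmin : is_min_on_simplex p pmin)
    (k : nat) :
  let D1 := omega l (bp l) (bq l) / fmin + 1 in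
  let D2 := (l * (l - 1))%:R / 2%:R
            * bmax l (fun a => `|bp l a|) / pmin in
  Num.max D1 D2 < k%:R ->
  (forall a : mindex n, mabs a = k -> 0 <= bp k a / bq k a) /\
  (forall i : 'I_n.+1,
     0 < bp k (mscale k (unitv i)) / bq k (mscale k (unitv i))).
Proof.
move=> D1 D2; rewrite gt_max => /andP[_]; rewrite /D2 -natr_bin2.
set M := bmax l _ => D2_lt.
have [[x0 x0_in px0] pmin_le] := Hpmin.
have pmin_gt0 : 0 < pmin by rewrite -px0; apply: Hp_pos.
have coef_le be : mabs be = l -> `|bp l be| <= M by apply: bmax_ge.
have pmin_le_M : pmin <= M.
  rewrite -px0 (Hbp l (leqnn l)); apply: bern_sum_le => // be /coef_le; exact: le_trans (ler_norm _).
have CM_lt : 'C(l, 2)%:R * M < k%:R * pmin by rewrite -ltr_pdivrMr // mulrC.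
have bin2_lt : ('C(l, 2) < k)%N.
  rewrite -(ltr_nat R); apply: le_lt_trans D2_lt.
  by rewrite -mulrA ler_peMr // ler_pdivlMr ?mul1r.
have le_lk := bin2_lt_leq bin2_lt.
have bpk_gt0 a : mabs a = k -> 0 < bp k a.
  move=> abs_a; rewrite (bern_coefs_elev le_lk (Hbp l (leqnn l)) (Hbp k le_lk)) //.
  apply: (elev_gt0 _ le_lk abs_a (le_trans (normr_ge0 _) (coef_le _ (mabs_mscale l ord0))))
    coef_le _ CM_lt; first exact: leq_ltn_trans bin2_lt.
  by move=> x x_in; rewrite -bern_sumE -(Hbp l (leqnn l)); apply: pmin_le.
have ratio_gt0 a : mabs a = k -> 0 < bp k a / bq k a.
  by move=> abs_a; rewrite divr_gt0 ?bpk_gt0 ?Hbq_pos.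
by split=> [a /ratio_gt0 /ltW //|i]; apply/ratio_gt0/mabs_mscale.
Qed.
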